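(* Let $G_{\mathrm{syn}}$ be an admissible group w.r.t. a prefix $P=\forall x_1,\dots,x_n\,\exists y_1(D_1),\dots,y_k(D_k)$. For every $g\in G_{\mathrm{syn}}$, the function $\mathcal S(P)\to\mathcal S(P)$, $s\mapsto g(s)$, lies in the associated group of $G_{\mathrm{syn}}$.
   Context: $X=\{x_1,\dots,x_n\}$, $Y=\{y_1,\dots,y_k\}$ are finite disjoint sets of propositional variables; $\operatorname{BF}(V)$ the propositional formulas over $V\subseteq X\cup Y$; $\mathcal A(V)$ the assignments $V\to\{\top,\bot\}$; $[\phi]_\sigma$ the truth value. Dependency sets $D_j\subseteq X$. An interpretation is $s=(s_1,\dots,s_k)$ with $s_j:\{\top,\bot\}^{|D_j|}\to\{\top,\bot\}$; $\mathcal S(P)$ the set of interpretations. For $\sigma\in\mathcal A(X)$, $\sigma_s\in\mathcal A(X\cup Y)$ equals $\sigma$ on $X$ and $\sigma_s(y_j)=s_j$ evaluated at $\sigma$'s values on $D_j$. For $g:\operatorname{BF}(V)\to\operatorname{BF}(V)$ and $\rho\in\mathcal A(V)$, $g(\rho)(v)=[g(v)]_\rho$; $g$ preserves propositional satisfiability if $[g(\phi)]_\rho=[\phi]_{g(\rho)}$ always. A formula in $\operatorname{BF}(Y)$ depends on $x_i$ if it contains some $y_j$ with $x_i\in D_j$. A bijection $g$ of $\operatorname{BF}(X\cup Y)$ is admissible w.r.t. $P$ if it preserves propositional satisfiability, $g(x_i)\in\operatorname{BF}(X)$, $g(y_j)\in\operatorname{BF}(Y)$, and if $g(y_j)$ depends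 on $x_i$ then $g^{-1}(x_i)\in\operatorname{BF}(D_j)$. An admissible group is a subgroup of all admissible functions. For admissible $g$ and $\sigma\in\mathcal A(X)$, $g(\sigma)(x)=[g(x)]_\sigma$. For $g\in G_{\mathrm{syn}}$, $g(s)$ is the (well-defined) interpretation $t$ with $\sigma_t=g(g^{-1}(\sigma)_s)$ for all $\sigma\in\mathcal A(X)$. The associated group of $G_{\mathrm{syn}}$ is the set of all bijections $f:\mathcal S(P)\to\mathcal S(P)$ such that for every $s\in\mathcal S(P)$ and every $\sigma\in\mathcal A(X)$ there exists $g\in G_{\mathrm{syn}}$ with $g(\sigma)_{f(s)}=g(\sigma_s)$. *)

From mathcomp Require Import all_boot.
Set Implicit Arguments. Unset Strict Implicit. Unset Printing Implicit Defensive.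

Inductive form (V : Type) : Type :=
  | FVar of V
  | FTrue
  | FFalse
  | FNot of form V
  | FAnd of form V & form V
  | FOr of form V & form V.
Arguments FTrue {V}. Arguments FFalse {V}.

Fixpoint eval V (rho : V -> bool) (phi : form V) : bool :=
  match phi with
  | FVar v => rho v
  | FTrue => true
  | FFalse => false
  | FNot p => ~~ eval rho p
  | FAnd p q => eval rho p && eval rho q
  | FOr p q => eval rho p || eval rho q
  end.

Fixpoint fvars V (phi : form V) : seq V :=
  match phi with
  | FVar v => [:: v]
  | FTrue | FFalse => [::]
  | FNot p => fvars p
  | FAnd p q | FOr p q => fvars p ++ fvars q
  end.

(* Variables: X = {x_1..x_n} as inl 'I_n, Y = {y_1..y_k} as inr 'I_k. *)
Definition var (n k : nat) := ('I_n + 'I_k)%type.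
Definition fm (n k : nat) := form (var n k).

Definition inBF n k (A : var n k -> bool) (phi : fm n k) : bool := all A (fvars phi).

Definition isX n k (v : var n k) : bool := if v is inl _ then true else false.
Definition isY n k (v : var n k) : bool := if v is inr _ then true else false.
Definition inD n k (D : 'I_k -> {set 'I_n}) (j : 'I_k) (v : var n k) : bool :=
  if v is inl x then x \in D j else false.

Definition depends n k (D : 'I_k -> {set 'I_n}) (phi : fm n k) (i : 'I_n) : Prop :=
  exists l : 'I_k, (inr l \in fvars phi) /\ (i \in D l).

Definition asg n k := {ffun var n k -> bool}.

Definition act_asg n k (g : fm n k -> fm n k) (rho : asg n k) : asg n k :=
  [ffun v => eval rho (g (FVar v))].

Definition preserves_sat n k (g : fm n k -> fm n k) : Prop :=
  forall (phi : fm n k) (rho : asg n k), eval rho (g phi) = eval (act_asg g rho) phi.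

Definition admissible n k (D : 'I_k -> {set 'I_n}) (g : fm n k -> fm n k) : Prop :=
  [/\ bijective g,
      preserves_sat g,
      (forall i : 'I_n, inBF (@isX n k) (g (FVar (inl i)))),
      (forall j : 'I_k, inBF (@isY n k) (g (FVar (inr j)))) &
      (forall (j : 'I_k) (i : 'I_n), depends D (g (FVar (inr j))) i ->
         forall phi : fm n k, g phi = FVar (inl i) -> inBF (inD D j) phi)].

Definition admissible_group n k (D : 'I_k -> {set 'I_n})
    (G : (fm n k -> fm n k) -> Prop) : Prop :=
  [/\ (forall g, G g -> admissible D g),
      G (fun phi => phi),
      (forall g h, G g -> G h -> G (g \o h)) &
      (forall g, G g -> exists h, [/\ G h, cancel g h & cancel h g])].

Definition asgD n k (D : 'I_k -> {set 'I_n}) (j : 'I_k) :=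
  {ffun {x : 'I_n | x \in D j} -> bool}.
Definition interp n k (D : 'I_k -> {set 'I_n}) :=
  forall j : 'I_k, {ffun asgD D j -> bool}.

Definition restr n k (D : 'I_k -> {set 'I_n}) (j : 'I_k) (sigma : {ffun 'I_n -> bool})
  : asgD D j := [ffun x => sigma (val x)].

Definition ext_s n k (D : 'I_k -> {set 'I_n}) (sigma : {ffun 'I_n -> bool})
  (s : interp D) : asg n k :=
  [ffun v => match v with inl x => sigma x | inr j => s j (restr D j sigma) end].

(* g(sigma)(x) = [g(x)]_sigma for sigma ∈ A(X) (g(x) ∈ BF(X); Y-values are irrelevant) *)
Definition act_asgX n k (g : fm n k -> fm n k) (sigma : {ffun 'I_n -> bool})
  : {ffun 'I_n -> bool} :=
  [ffun x => eval (fun v : var n k => match v with inl y => sigma y | inr _ => false end)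
                  (g (FVar (inl x)))].

Definition extendD n k (D : 'I_k -> {set 'I_n}) (j : 'I_k) (a : asgD D j)
  : {ffun 'I_n -> bool} :=
  [ffun x => if @insub _ (fun x => x \in D j) {x : 'I_n | x \in D j} x is Some y
             then a y else false].

(* g(s) : the interpretation t with sigma_t = g(g^{-1}(sigma)_s);
   t_j at an assignment a of D_j is the y_j-value of g(g^{-1}(sigma)_s)
   for sigma any extension of a (well-definedness is claimed in the paper). *)
Definition act_interp n k (D : 'I_k -> {set 'I_n}) (g ginv : fm n k -> fm n k)
  (s : interp D) : interp D :=
  fun j => [ffun a => act_asg g (ext_s (act_asgX ginv (extendD a)) s) (inr j)].

Definition in_assoc_group n k (D : 'I_k -> {set 'I_n})
    (G : (fm n k -> fm n k) -> Prop) (f : interp D -> interp D) : Prop :=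
  bijective f /\
  forall (s : interp D) (sigma : {ffun 'I_n -> bool}),
    exists h, G h /\ ext_s (act_asgX h sigma) (f s) = act_asg h (ext_s sigma s).

From mathcomp Require Import all_boot.
From Stdlib Require Import FunctionalExtensionality.
Set Implicit Arguments. Unset Strict Implicit. Unset Printing Implicit Defensive.

(* An admissible g acts on assignments of X ∪ Y by rho |-> g(rho), and since g
   preserves satisfiability, g^-1 undoes this action.  The heart of the proof is
   the identity g(sigma)_{g(s)} = g(sigma_s), which shows that g itself is the
   witness required by the associated group.  On x_i both sides are [g(x_i)]_sigma
   because g(x_i) mentions only X.  On y_j both sides evaluate g(y_j), a formula
   in the y_l; the arguments of s_l agree because every x_i in D_l is recovered
   from g(sigma) as [g^-1(x_i)]_{g(sigma)}, and admissibility puts g^-1(x_i) in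
   BF(D_j), so only the D_j-part of g(sigma), which g(s)_j sees, is used.
   Applying the identity for g and then for g^-1 shows s |-> g^-1(s) inverts
   s |-> g(s). *)

Section EvalLocal.
Variable V : eqType.

Lemma eval_eq_in (r1 r2 : V -> bool) (phi : form V) :
  {in fvars phi, r1 =1 r2} -> eval r1 phi = eval r2 phi.
Proof.
elim: phi => //= [v|p IHp|p IHp q IHq|p IHp q IHq] r12.
- by apply: r12; rewrite mem_head.
- by rewrite IHp.
- by rewrite IHp ?IHq // => v v_in; apply: r12; rewrite mem_cat v_in ?orbT.
- by rewrite IHp ?IHq // => v v_in; apply: r12; rewrite mem_cat v_in ?orbT.
Qed.

Lemma eval_all (A : pred V) (r1 r2 : V -> bool) (phi : form V) :
  all A (fvars phi) -> {in A, r1 =1 r2} -> eval r1 phi = eval r2 phi.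
Proof. by move=> /allP phiA r12; apply: eval_eq_in => v /phiA; apply: r12. Qed.

End EvalLocal.

Section Interpretations.
Variables (n k : nat) (D : 'I_k -> {set 'I_n}).

Lemma act_asgE (g : fm n k -> fm n k) (rho : asg n k) v :
  act_asg g rho v = eval rho (g (FVar v)).
Proof. by rewrite ffunE. Qed.

Lemma ext_s_inl (sigma : {ffun 'I_n -> bool}) (s : interp D) x :
  ext_s sigma s (inl x) = sigma x.
Proof. by rewrite ffunE. Qed.

Lemma ext_s_inr (sigma : {ffun 'I_n -> bool}) (s : interp D) j :
  ext_s sigma s (inr j) = s j (restr D j sigma).
Proof. by rewrite ffunE. Qed.

Lemma restr_extendD j (a : asgD D j) : restr D j (extendD a) = a.
Proof. by apply/ffunP => y; rewrite !ffunE valK. Qed.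

Lemma interp_ext (s t : interp D) :
  (forall sigma, ext_s sigma s = ext_s sigma t) -> s = t.
Proof.
move=> est; apply: functional_extensionality_dep => j; apply/ffunP => a.
have := congr1 (fun rho : asg n k => rho (inr j)) (est (extendD a)).
by rewrite !ext_s_inr restr_extendD.
Qed.

End Interpretations.

Section AdmissibleAction.
Variables (n k : nat) (D : 'I_k -> {set 'I_n}) (g g' : fm n k -> fm n k).
Hypotheses (g_adm : admissible D g) (g'K : cancel g' g).

Lemma act_asgX_eval (sigma : {ffun 'I_n -> bool}) (rho : asg n k) x :
  (forall y, rho (inl y) = sigma y) ->
  act_asgX g sigma x = eval rho (g (FVar (inl x))).
Proof.
case: g_adm => _ _ gX _ _ rho_sigma; rewrite ffunE.
by apply: eval_all (gX x) _ => -[y _|//=]; rewrite rho_sigma.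
Qed.

Lemma act_asg_ext_s_inl (sigma : {ffun 'I_n -> bool}) (s : interp D) x :
  act_asg g (ext_s sigma s) (inl x) = act_asgX g sigma x.
Proof.
by rewrite act_asgE (act_asgX_eval (rho := ext_s sigma s)) // => y; rewrite ext_s_inl.
Qed.

Lemma eval_act_asg_inv (rho : asg n k) v :
  eval (act_asg g rho) (g' (FVar v)) = rho v.
Proof. by case: g_adm => _ g_sat _ _ _; rewrite -g_sat g'K. Qed.

Lemma act_asgK : cancel (act_asg g) (act_asg g').
Proof. by move=> rho; apply/ffunP => v; rewrite act_asgE eval_act_asg_inv. Qed.

Lemma ext_s_act_interp (sigma : {ffun 'I_n -> bool}) (s : interp D) :
  ext_s (act_asgX g sigma) (act_interp g g' s) = act_asg g (ext_s sigma s).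
Proof.
case: (g_adm) => _ _ _ gY g_dep.
apply/ffunP => -[x|j]; first by rewrite ext_s_inl act_asg_ext_s_inl.
rewrite ext_s_inr ffunE !act_asgE; apply: eval_eq_in => v v_gy.
have := allP (gY j) v v_gy; case: v v_gy => // l l_gy _.
rewrite !ext_s_inr; congr (s l _); apply/ffunP => -[i iDl].
rewrite !ffunE /=.
have g'xi_Dj : inBF (inD D j) (g' (FVar (inl i))).
  by apply: (g_dep j i) => //; exists l.
rewrite -[sigma i](ext_s_inl sigma s) -eval_act_asg_inv.
apply: eval_all g'xi_Dj _ => -[i' i'Dj|//=].
by rewrite act_asg_ext_s_inl ffunE insubT ffunE.
Qed.

End AdmissibleAction.

Lemma act_interpK n k (D : 'I_k -> {set 'I_n}) (g g' : fm n k -> fm n k) :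
  admissible D g -> admissible D g' -> cancel g g' -> cancel g' g ->
  cancel (act_interp (D := D) g g') (act_interp g' g).
Proof.
move=> g_adm g'_adm gK g'K s; apply: interp_ext => sigma.
have := ext_s_act_interp g'_adm gK (act_asgX g sigma) (act_interp g g' s).
rewrite (ext_s_act_interp g_adm g'K) (act_asgK g_adm g'K) => e.
have act_asgXK : act_asgX g' (act_asgX g sigma) = sigma.
  apply/ffunP => x.
  by have := congr1 (fun rho : asg n k => rho (inl x)) e; rewrite !ext_s_inl.
by rewrite act_asgXK in e.
Qed.

Theorem lemma4 (n k : nat) (D : 'I_k -> {set 'I_n}) (G : (fm n k -> fm n k) -> Prop)
    (g ginv : fm n k -> fm n k) :
  admissible_group D G -> G g -> cancel g ginv -> cancel ginv g ->
  @in_assoc_group n k D G (@act_interp n k D g ginv).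
Proof.
move=> [G_adm _ _ G_inv] Gg gK ginvK.
have [h [Gh _ hK]] := G_inv g Gg.
have ginv_h : ginv = h.
  by apply: functional_extensionality => phi; rewrite -{1}(hK phi) gK.
have g_adm := G_adm g Gg.
have ginv_adm : admissible D ginv by rewrite ginv_h; apply: G_adm.
split; first by exists (act_interp ginv g); apply: act_interpK.
by move=> s sigma; exists g; split; last apply: ext_s_act_interp.
Qed.
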